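(* Let $\kappa$ be a regular uncountable cardinal with $\kappa^{<\kappa}=\kappa$ and $\gamma^\omega<\kappa$ for all $\gamma<\kappa$, and let $I$ and $I_\alpha$ be as in the context. For every limit ordinal $\delta<\kappa$ and every $\nu\in I$ there is $\beta<\delta$ such that for every $\sigma\in I_\delta$ with $\sigma>\nu$ there is $\sigma'\in I_\beta$ with $\sigma\ge\sigma'\ge\nu$.
   Context: $I^0$: order $\kappa\times\mathbb Q$ lexicographically; $I^0$ is the set of $f:\omega\to\kappa\times\mathbb Q$, $f(n)=(f_1(n),f_2(n))$, with $\{n\mid f_1(n)\ne0\}$ finite, ordered by comparing at the least $n$ where they differ. Construct linear orders $I^0\subseteq I^1\subseteq\dots$ ($i<\kappa$): given $I^i$, for each $\nu\in I^i$ add a new element $\nu^{i+1}$ with $\nu^{i+1}<\nu$ and, for every $\tau\in I^i\setminus\{\nu\}$, $\tau<\nu^{i+1}$ iff $\tau<\nu$ (for distinct $\nu,\mu$, $\nu^{i+1}<\mu^{i+1}$ iff $\nu<\mu$); $I^{i+1}=I^i\cup\{\nu^{i+1}\mid\nu\in I^i\}$; at limits take unions; $I=\bigcup_{i<\kappa}I^i$. Representations: $I^0_\alpha=\{\nu\in I^0\mid\nu_1(n)<\alpha\ \forall n\}$; $I^{i+1}_\alpha=I^i_\alpha\cup\{\nu^{i+1}\mid\nu\in I^i_\alpha\}$; for limit $i$, $I^i_\alpha=\bigcup_{j<i}I^j_\alpha$; finally $I_\alpha=I^\alpha_\alpha$. *)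

From mathcomp Require Import all_boot all_order all_algebra.
From Stdlib Require Import List.
Set Implicit Arguments. Unset Strict Implicit. Unset Printing Implicit Defensive.

(* The cardinal kappa, modelled as a type K strictly well-ordered by klt; *)
(* the ordinals < kappa are the elements of K, and kappa is the order      *)
(* type of K.  k0 is the least element (the ordinal 0).                    *)

Section Kappa.
Variables (K : Type) (klt : K -> K -> Prop).

(* the initial segment {x | x < g} (i.e. the ordinal g as a set) *)
Definition seg (g : K) : Type := { x : K | klt x g }.

Definition injective_fun (A B : Type) (f : A -> B) : Prop :=
  forall a b, f a = f b -> a = b.

(* |A| < kappa  :<->  A injects into some ordinal g < kappa *)
Definition small (A : Type) : Prop :=
  exists g : K, exists f : A -> seg g, injective_fun f.

Definition strict_well_order : Prop :=
  well_founded klt /\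
  (forall x, ~ klt x x) /\
  (forall x y z, klt x y -> klt y z -> klt x z) /\
  (forall x y, klt x y \/ x = y \/ klt y x).

(* kappa is a cardinal: no ordinal g < kappa is equinumerous with kappa *)
Definition is_cardinal : Prop :=
  forall g : K, ~ exists f : K -> seg g, injective_fun f.

Definition uncountable : Prop :=
  ~ exists f : K -> nat, injective_fun f.

Definition regular : Prop :=
  forall X : K -> Prop, small { x : K | X x } ->
    exists b : K, forall x, X x -> klt x b.

(* kappa^{<kappa} = kappa : for each g < kappa, |kappa^g| <= kappa *)
Definition kappa_lt_kappa : Prop :=
  forall g : K, exists f : (seg g -> K) -> K, injective_fun f.

(* gamma^omega < kappa for all gamma < kappa *)
Definition omega_powers_small : Prop :=
  forall g : K, small (nat -> seg g).

Definition is_limit (d : K) (k0 : K) : Prop :=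
  d <> k0 /\ forall b, klt b d -> exists b', klt b b' /\ klt b' d.

End Kappa.

(* An element of I is coded as a pair (eta, s) where eta in I^0 and        *)
(* s = [i1; ...; ik] is a strictly increasing list of ordinals < kappa:    *)
(* it codes eta^{i1+1 ... ik+1}, i.e. ((eta^{i1+1})^{i2+1})...^{ik+1}.     *)
(* Thus nu^{i+1} (for nu in I^i) is coded by  succ_el nu i.               *)

Section Construction.
Variables (K : Type) (klt : K -> K -> Prop) (k0 : K).

Definition base := nat -> (K * rat)%type.
Definition elt := (base * list K)%type.

Definition in_I0 (eta : base) : Prop :=
  exists N, forall n, (N <= n)%N -> fst (eta n) = k0.

Definition increasing (s : list K) : Prop :=
  forall i j a b, (i < j)%N -> nth_error s i = Some a -> nth_error s j = Some b ->
    klt a b.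

Definition in_I (x : elt) : Prop := in_I0 (fst x) /\ increasing (snd x).

Definition in_Ii (i : K) (x : elt) : Prop :=
  in_I x /\ forall a, In a (snd x) -> klt a i.

Definition succ_el (x : elt) (i : K) : elt := (fst x, rcons (snd x) i).

Definition base_el (eta : base) : elt := (eta, nil).

Definition eq_el (x y : elt) : Prop :=
  (forall n, fst x n = fst y n) /\ snd x = snd y.

Definition lt_KQ (p q : K * rat) : Prop :=
  klt p.1 q.1 \/ (p.1 = q.1 /\ (p.2 < q.2)%R).

Definition lt_I0 (f g : base) : Prop :=
  exists n, (forall m, (m < n)%N -> f m = g m) /\ lt_KQ (f n) (g n).

(* I^alpha_alpha = I_alpha *)
Definition in_Ialpha (al : K) (x : elt) : Prop :=
  in_Ii al x /\ forall n, klt (fst (fst x n)) al.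

(* lt is the order of I produced by the construction in the context. *)
Definition construction_order (lt : elt -> elt -> Prop) : Prop :=
  (forall x, in_I x -> ~ lt x x) /\
  (forall x y z, in_I x -> in_I y -> in_I z -> lt x y -> lt y z -> lt x z) /\
  (forall x y, in_I x -> in_I y -> eq_el x y \/ lt x y \/ lt y x) /\
  (forall x x' y y', eq_el x x' -> eq_el y y' -> lt x y -> lt x' y') /\
  (forall eta th, in_I0 eta -> in_I0 th ->
     (lt (base_el eta) (base_el th) <-> lt_I0 eta th)) /\
  (forall i nu, in_Ii i nu -> lt (succ_el nu i) nu) /\
  (forall i nu tau, in_Ii i nu -> in_Ii i tau -> ~ eq_el tau nu ->
     (lt tau (succ_el nu i) <-> lt tau nu)) /\
  (forall i nu mu, in_Ii i nu -> in_Ii i mu -> ~ eq_el nu mu ->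
     (lt (succ_el nu i) (succ_el mu i) <-> lt nu mu)).

End Construction.

From Pilot Require Import Defs.
From mathcomp Require Import all_boot all_order all_algebra.
From Stdlib Require Import List Sorted Classical.
From mathcomp Require Import zify lra.

(* The defining clauses of the construction force, by induction on the number of
   stages, that the order compares the I^0 parts lexicographically and, for equal I^0 parts,
   the stage lists at their first difference, a proper extension lying below
   (nu^{i+1} < nu).  Hence between nu < sigma there is a sigma' built only from 0
   and from ordinals occurring in nu that are below delta: the I^0 part of nu cut
   off after its first difference with sigma and raised there by a rational, or the
   stage list of nu cut off after its first difference with sigma.  These are
   finitely many ordinals below the limit delta, hence below some beta < delta. *)

Set Implicit Arguments.
Unset Strict Implicit.

Section StageLists.
Variables (K : Type) (klt : K -> K -> Prop).
Hypothesis klt_irrefl : forall x, ~ klt x x.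
Hypothesis klt_trans : forall x y z, klt x y -> klt y z -> klt x z.
Hypothesis klt_total : forall x y, klt x y \/ x = y \/ klt y x.

Definition bounded_by (i : K) (s : list K) : Prop := forall a, In a s -> klt a i.

Lemma In_rcons (a i : K) s : In a (rcons s i) <-> In a s \/ i = a.
Proof. by elim: s => [|x s IH] /=; [tauto | rewrite IH; tauto]. Qed.

Lemma increasingP s : increasing klt s <-> StronglySorted klt s.
Proof.
elim: s => [|x s IH].
  by split=> [_|_ i j a b _]; [exact: SSorted_nil | case: i].
split=> [H|].
- constructor; first by apply/IH => i j a b ij; exact: (H i.+1 j.+1).
  apply/Forall_forall => y Hy; have [k Hk] := In_nth_error _ _ Hy.
  exact: (H 0 k.+1).
- move=> /(@StronglySorted_inv _ _ _ _) [/IH Hs /Forall_forall Hx].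
  move=> [|i] [|j] a b //= ij.
  + by move=> [<-] Hb; apply: Hx; exact: nth_error_In Hb.
  + exact: Hs.
Qed.

Lemma increasing_rcons s i :
  increasing klt (rcons s i) <-> increasing klt s /\ bounded_by i s.
Proof.
rewrite !increasingP; elim: s => [|x s IH] /=.
  by split=> [_|_]; [split=> [|a []]; constructor | repeat constructor].
split.
- move=> /(@StronglySorted_inv _ _ _ _) [/IH [Hs Hi] /Forall_forall Hx]; split.
    by constructor=> //; apply/Forall_forall => y Hy; apply: Hx; apply/In_rcons; left.
  by move=> a [<-|/Hi //]; apply: Hx; apply/In_rcons; right.
- case=> /(@StronglySorted_inv _ _ _ _) [Hs /Forall_forall Hx] Hi; constructor.
    by apply/IH; split=> // a Ha; apply: Hi; right.
  by apply/Forall_forall => y /In_rcons [/Hx //|<-]; apply: Hi; left.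
Qed.

Lemma increasing_prefix s p u : s = p ++ u -> increasing klt s -> increasing klt p.
Proof.
move=> -> H i j a b ij Ha Hb.
have in_app k c : nth_error p k = Some c -> nth_error (p ++ u) k = Some c.
  by move=> E; rewrite nth_error_app1 // -nth_error_Some E.
exact: H ij (in_app _ _ Ha) (in_app _ _ Hb).
Qed.

Lemma last_stage_cases s t : increasing klt s -> increasing klt t ->
  [\/ s = [::] /\ t = [::],
      exists s0 i, s = rcons s0 i /\ bounded_by i t,
      exists t0 j, t = rcons t0 j /\ bounded_by j s |
      exists s0 t0 i, s = rcons s0 i /\ t = rcons t0 i].
Proof.
case/lastP: s => [|s0 i]; case/lastP: t => [|t0 j] Hs Ht.
- by constructor 1.
- by constructor 3; exists t0, j; split=> // a [].
- by constructor 2; exists s0, i; split=> // a [].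
- case/increasing_rcons: Hs => _ Hs0; case/increasing_rcons: Ht => _ Ht0.
  case: (klt_total i j) => [ij|[<-|ji]].
  + constructor 3; exists t0, j; split=> // a /In_rcons [/Hs0 ai|<-] //.
    exact: klt_trans ai ij.
  + by constructor 4; exists s0, t0, i.
  + constructor 2; exists s0, i; split=> // a /In_rcons [/Ht0 aj|<-] //.
    exact: klt_trans aj ji.
Qed.

Fixpoint stages_lt (s t : list K) : Prop :=
  match s, t with
  | [::], _ => False
  | _ :: _, [::] => True
  | i :: s', j :: t' => klt i j \/ i = j /\ stages_lt s' t'
  end.

Lemma stages_lt_irrefl s : ~ stages_lt s s.
Proof. by elim: s => [|x s IH] //= [/klt_irrefl|[_ /IH]]. Qed.

Lemma stages_lt_rcons_self s i : stages_lt (rcons s i) s.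
Proof. by elim: s => [|x s IH] //=; right. Qed.

Lemma not_stages_lt_rcons s i : ~ stages_lt s (rcons s i).
Proof. by elim: s => [|x s IH] //= [/klt_irrefl|[_ /IH]]. Qed.

Lemma stages_lt_cons_congr x y s t s' t' :
  (x = y -> stages_lt s t <-> stages_lt s' t') ->
  stages_lt (x :: s) (y :: t) <-> stages_lt (x :: s') (y :: t').
Proof. by move=> H /=; split=> -[|[E /(H E)]]; auto. Qed.

Lemma stages_lt_rcons_l s t i : bounded_by i t -> s <> t ->
  stages_lt (rcons s i) t <-> stages_lt s t.
Proof.
elim: s t => [|x s IH] [|y t] //= Hti Hst.
- split=> // -[lt_iy|[_ []]].
  exact: klt_irrefl (klt_trans lt_iy (Hti y (or_introl erefl))).
- apply: stages_lt_cons_congr => E; apply: IH => [a Ha|Est].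
    by apply: Hti; right.
  by apply: Hst; rewrite E Est.
Qed.

Lemma stages_lt_rcons_r s t j : bounded_by j s -> s <> t ->
  stages_lt s (rcons t j) <-> stages_lt s t.
Proof.
elim: s t => [|x s IH] [|y t] //= Hsj Hst.
- by split=> // _; left; apply: Hsj; left.
- apply: stages_lt_cons_congr => E; apply: IH => [a Ha|Est].
    by apply: Hsj; right.
  by apply: Hst; rewrite E Est.
Qed.

Lemma stages_lt_rcons2 s t i : bounded_by i s -> bounded_by i t -> s <> t ->
  stages_lt (rcons s i) (rcons t i) <-> stages_lt s t.
Proof.
elim: s t => [|x s IH] [|y t] //= Hsi Hti Hst.
- split=> // -[lt_iy|[_ []]].
  exact: klt_irrefl (klt_trans lt_iy (Hti y (or_introl erefl))).
- by split=> // _; left; apply: Hsi; left.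
- apply: stages_lt_cons_congr => E; apply: IH => [a Ha|a Ha|Est].
  + by apply: Hsi; right.
  + by apply: Hti; right.
  + by apply: Hst; rewrite E Est.
Qed.

Lemma stages_lt_interpolate d s t : bounded_by d t -> stages_lt s t ->
  exists2 p, (exists u, s = p ++ u) &
    [/\ p = t \/ stages_lt p t, p = s \/ stages_lt s p & bounded_by d p].
Proof.
elim: s t => [|x s IH] [|y t] //= Htd.
- move=> _; exists [::]; first by exists (x :: s).
  by split; [left | right | move=> a []].
- case=> [lt_xy|[Exy lt_st]]; last subst y.
  + exists [:: x]; first by exists s.
    split; last by move=> a [<-|[]]; apply: klt_trans lt_xy (Htd y _); left.
    * by right; left.
    * by case: (s) => [|z s']; [left | right; right].
  + have [|p [u ->] [Hpt Hps Hpd]] := IH t _ lt_st.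
      by move=> a Ha; apply: Htd; right.
    exists (x :: p); first by exists u.
    split; last by move=> a [<-|/Hpd //]; apply: Htd; left.
    * by case: Hpt => [->|?]; [left | right; right].
    * by case: Hps => [<-|?]; [left | right; right].
Qed.

End StageLists.

Section Code.
Variables (K : Type) (klt : K -> K -> Prop).
Hypothesis klt_irrefl : forall x, ~ klt x x.
Hypothesis klt_trans : forall x y z, klt x y -> klt y z -> klt x z.

Definition code_lt (x y : elt K) : Prop :=
  lt_I0 klt x.1 y.1 \/ x.1 =1 y.1 /\ stages_lt klt x.2 y.2.

Lemma eq_el_refl (x : elt K) : eq_el x x.
Proof. by []. Qed.

Lemma eq_el_sym (x y : elt K) : eq_el x y -> eq_el y x.
Proof. by case=> E Es; split=> [n|]; rewrite ?E ?Es. Qed.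

Lemma lt_I0_eqfun_false (a b : base K) : a =1 b -> ~ lt_I0 klt a b.
Proof.
by move=> E [n [_]]; rewrite E => -[/klt_irrefl|[_]] //; rewrite Order.POrderTheory.ltxx.
Qed.

Lemma code_lt_eq_el_false x y : eq_el x y -> ~ code_lt x y.
Proof.
case=> E Es [/(lt_I0_eqfun_false E) //|[_]].
by rewrite Es; apply: stages_lt_irrefl.
Qed.

Lemma code_lt_congr_stages (a b : base K) s t s' t' :
  (a =1 b -> stages_lt klt s t <-> stages_lt klt s' t') ->
  code_lt (a, s) (b, t) <-> code_lt (a, s') (b, t').
Proof. by move=> H; rewrite /code_lt /=; split=> -[|[E /(H E)]]; auto. Qed.

Lemma code_lt_succ_l nu tau i : bounded_by klt i tau.2 -> ~ eq_el tau nu ->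
  code_lt (succ_el nu i) tau <-> code_lt nu tau.
Proof.
case: nu tau => [a s] [b t] /= Hti Hne; apply: code_lt_congr_stages => E.
by apply: stages_lt_rcons_l => // Est; apply: Hne; split=> //= n; rewrite E.
Qed.

Lemma code_lt_succ_r nu tau j : bounded_by klt j tau.2 -> ~ eq_el tau nu ->
  code_lt tau (succ_el nu j) <-> code_lt tau nu.
Proof.
case: nu tau => [a s] [b t] /= Htj Hne; apply: code_lt_congr_stages => E.
by apply: stages_lt_rcons_r => // Est; apply: Hne; split.
Qed.

Lemma code_lt_succ2 nu mu i : bounded_by klt i nu.2 -> bounded_by klt i mu.2 ->
  ~ eq_el nu mu -> code_lt (succ_el nu i) (succ_el mu i) <-> code_lt nu mu.
Proof.
case: nu mu => [a s] [b t] /= Hsi Hti Hne; apply: code_lt_congr_stages => E.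
by apply: stages_lt_rcons2 => // Est; apply: Hne; split.
Qed.

End Code.

Section Characterization.
Variables (K : Type) (klt : K -> K -> Prop) (k0 : K) (lt : elt K -> elt K -> Prop).
Hypothesis klt_irrefl : forall x, ~ klt x x.
Hypothesis klt_trans : forall x y z, klt x y -> klt y z -> klt x z.
Hypothesis klt_total : forall x y, klt x y \/ x = y \/ klt y x.
Hypothesis Hlt : construction_order klt k0 lt.

Local Notation in_I := (in_I klt k0).
Local Notation in_Ii := (in_Ii klt k0).

Let lt_irrefl x : in_I x -> ~ lt x x.
Proof. by case: Hlt => H _; apply: H. Qed.

Let lt_trans x y z : in_I x -> in_I y -> in_I z -> lt x y -> lt y z -> lt x z.
Proof. by case: Hlt => _ [H _]; apply: H. Qed.

Let lt_total x y : in_I x -> in_I y -> eq_el x y \/ lt x y \/ lt y x.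
Proof. by case: Hlt => _ [_ [H _]]; apply: H. Qed.

Let lt_eq_el x x' y y' : eq_el x x' -> eq_el y y' -> lt x y -> lt x' y'.
Proof. by case: Hlt => _ [_ [_ [H _]]]; apply: H. Qed.

Let lt_base eta th : in_I0 k0 eta -> in_I0 k0 th ->
  lt (base_el eta) (base_el th) <-> lt_I0 klt eta th.
Proof. by case: Hlt => _ [_ [_ [_ [H _]]]]; apply: H. Qed.

Let lt_succ_self i nu : in_Ii i nu -> lt (succ_el nu i) nu.
Proof. by case: Hlt => _ [_ [_ [_ [_ [H _]]]]]; apply: H. Qed.

Let lt_succ_r i nu tau : in_Ii i nu -> in_Ii i tau -> ~ eq_el tau nu ->
  lt tau (succ_el nu i) <-> lt tau nu.
Proof. by case: Hlt => _ [_ [_ [_ [_ [_ [H _]]]]]]; apply: H. Qed.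

Let lt_succ2 i nu mu : in_Ii i nu -> in_Ii i mu -> ~ eq_el nu mu ->
  lt (succ_el nu i) (succ_el mu i) <-> lt nu mu.
Proof. by case: Hlt => _ [_ [_ [_ [_ [_ [_ H]]]]]]; apply: H. Qed.

Lemma in_I_succ_el nu i : in_I (succ_el nu i) <-> in_Ii i nu.
Proof. by rewrite /in_Ii /Defs.in_I /= increasing_rcons; tauto. Qed.

Lemma lt_asym x y : in_I x -> in_I y -> lt x y -> ~ lt y x.
Proof. by move=> Hx Hy xy yx; apply: (lt_irrefl Hx); apply: (lt_trans Hx Hy Hx xy yx). Qed.

Lemma lt_eq_el_false x y : in_I x -> eq_el x y -> ~ lt x y.
Proof. by move=> Hx E /(lt_eq_el (eq_el_refl x) (eq_el_sym E)); apply: lt_irrefl. Qed.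

Lemma lt_succ_l i nu tau : in_Ii i nu -> in_Ii i tau -> ~ eq_el tau nu ->
  lt (succ_el nu i) tau <-> lt nu tau.
Proof.
move=> Hnu Htau Hne; have Hsucc : in_I (succ_el nu i) by apply/in_I_succ_el.
split=> [lt_s_tau|]; last exact: lt_trans Hsucc Hnu.1 Htau.1 (lt_succ_self Hnu).
case: (lt_total Htau.1 Hnu.1) => [/Hne []|[lt_tau_nu|//]].
by case: (lt_asym Hsucc Htau.1 lt_s_tau); apply/lt_succ_r.
Qed.

Lemma lt_code_succ_l i nu tau : in_Ii i nu -> in_Ii i tau ->
  (lt nu tau <-> code_lt klt nu tau) ->
  lt (succ_el nu i) tau <-> code_lt klt (succ_el nu i) tau.
Proof.
move=> Hnu Htau IH; case: (classic (eq_el tau nu)) => [E|NE].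
- split=> _; last exact: lt_eq_el (eq_el_refl _) (eq_el_sym E) (lt_succ_self Hnu).
  case: nu tau E {Hnu Htau IH} => [a s] [b t] [] /= E ->; right.
  by split=> [n|] /=; [rewrite E | apply: stages_lt_rcons_self].
- by rewrite lt_succ_l // IH code_lt_succ_l //; case: Htau.
Qed.

Lemma lt_code_succ_r j nu tau : in_Ii j nu -> in_Ii j tau ->
  (lt tau nu <-> code_lt klt tau nu) ->
  lt tau (succ_el nu j) <-> code_lt klt tau (succ_el nu j).
Proof.
move=> Hnu Htau IH; case: (classic (eq_el tau nu)) => [E|NE].
- split=> H; exfalso.
  + have Hsucc : in_I (succ_el nu j) by apply/in_I_succ_el.
    exact: lt_asym Htau.1 Hsucc H (lt_eq_el (eq_el_refl _) (eq_el_sym E) (lt_succ_self Hnu)).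
  + case: nu tau E H {Hnu Htau IH} => [a s] [b t] [] /= E -> [|[_]].
      exact: lt_I0_eqfun_false.
    exact: not_stages_lt_rcons.
- by rewrite lt_succ_r // IH code_lt_succ_r //; case: Htau.
Qed.

Lemma lt_code_succ2 i nu mu : in_Ii i nu -> in_Ii i mu ->
  (lt nu mu <-> code_lt klt nu mu) ->
  lt (succ_el nu i) (succ_el mu i) <-> code_lt klt (succ_el nu i) (succ_el mu i).
Proof.
move=> Hnu Hmu IH; case: (classic (eq_el nu mu)) => [E|NE].
- have Es : eq_el (succ_el nu i) (succ_el mu i) by case: E => E1 E2; split=> //=; rewrite E2.
  split=> H; exfalso; last exact: code_lt_eq_el_false Es H.
  by apply: lt_eq_el_false Es H; apply/in_I_succ_el.
- by rewrite lt_succ2 // IH code_lt_succ2 //; [case: Hnu | case: Hmu].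
Qed.

Theorem lt_codeE x y : in_I x -> in_I y -> lt x y <-> code_lt klt x y.
Proof.
suff: forall n x y, size x.2 + size y.2 < n -> in_I x -> in_I y ->
  lt x y <-> code_lt klt x y by apply.
elim=> // n IH [a s] [b t] /= Hn Hx Hy.
case: (last_stage_cases klt_trans klt_total Hx.2 Hy.2) => /=.
- case=> -> ->; rewrite /code_lt /= (lt_base Hx.1 Hy.1); tauto.
- case=> s0 [i [Es Hti]]; subst s.
  have Hs0 : in_Ii i (a, s0) by apply/in_I_succ_el.
  apply: (lt_code_succ_l (nu := (a, s0)) (tau := (b, t))) => //.
  by apply: (IH _ _ _ Hs0.1 Hy) => /=; rewrite size_rcons in Hn; lia.
- case=> t0 [j [Et Hsj]]; subst t.
  have Ht0 : in_Ii j (b, t0) by apply/in_I_succ_el.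
  apply: (lt_code_succ_r (nu := (b, t0)) (tau := (a, s))) => //.
  by apply: (IH _ _ _ Hx Ht0.1) => /=; rewrite size_rcons in Hn; lia.
- case=> s0 [t0 [i [Es Et]]]; subst s t.
  have Hs0 : in_Ii i (a, s0) by apply/in_I_succ_el.
  have Ht0 : in_Ii i (b, t0) by apply/in_I_succ_el.
  apply: (lt_code_succ2 (nu := (a, s0)) (mu := (b, t0))) => //.
  by apply: (IH _ _ _ Hs0.1 Ht0.1) => /=; rewrite !size_rcons in Hn; lia.
Qed.

End Characterization.

Section Interpolation.
Variables (K : Type) (klt : K -> K -> Prop) (k0 : K).
Hypothesis klt_trans : forall x y z, klt x y -> klt y z -> klt x z.

Definition occurs (a : K) (x : elt K) : Prop := (exists m, (x.1 m).1 = a) \/ In a x.2.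

Lemma in_IalphaE al x :
  in_Ialpha klt k0 al x <-> in_I klt k0 x /\ forall a, occurs a x -> klt a al.
Proof.
split=> [[[Hx Hs] Hb]|[Hx H]].
  by split=> // a [[m <-]|/Hs].
by split=> [|m]; [split=> // a Ha | ]; apply: H; [right | left; exists m].
Qed.

Lemma lt_KQ_dense_above (p q : K * rat) : lt_KQ klt p q ->
  exists r, (p.2 < r)%R /\ lt_KQ klt (p.1, r) q.
Proof.
case=> [lt_pq|[E lt_pq]].
  by exists (p.2 + 1)%R; split; [lra | left].
by exists ((p.2 + q.2) / 2)%R; split; [lra | right; split=> /=; [|lra]].
Qed.

Lemma lt_I0_interpolate d (eta th : base K) : (forall m, klt (th m).1 d) ->
  lt_I0 klt eta th -> exists zeta, [/\ in_I0 k0 zeta, lt_I0 klt eta zeta,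
    lt_I0 klt zeta th & forall m, (zeta m).1 = k0 \/ (zeta m).1 = (eta m).1 /\ klt (eta m).1 d].
Proof.
move=> Hth [n [Hpre Hn]]; have [r [lt_r Hr]] := lt_KQ_dense_above Hn.
have Hn_d : klt (eta n).1 d.
  by case: Hn => [H|[-> _]]; [exact: klt_trans H (Hth n) | exact: Hth].
pose zeta m := if (m < n)%N then eta m else if m == n then ((eta n).1, r) else (k0, 0%R).
exists zeta; split.
- by exists n.+1 => m Hm; rewrite /zeta ifF ?ifF //; lia.
- exists n; split=> [m Hm|]; first by rewrite /zeta Hm.
  by rewrite /zeta ltnn eqxx; right.
- exists n; split=> [m Hm|]; first by rewrite /zeta Hm Hpre.
  by rewrite /zeta ltnn eqxx.
- move=> m; rewrite /zeta; case: ltnP => Hm.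
    by right; rewrite Hpre.
  by case: eqP => [->|_]; [right | left].
Qed.

Lemma code_lt_interpolate d nu sigma : in_I klt k0 nu ->
  (forall a, occurs a sigma -> klt a d) -> code_lt klt nu sigma ->
  exists sigma', [/\ in_I klt k0 sigma',
    eq_el sigma sigma' \/ code_lt klt sigma' sigma,
    eq_el sigma' nu \/ code_lt klt nu sigma' &
    forall a, occurs a sigma' -> a = k0 \/ occurs a nu /\ klt a d].
Proof.
case: nu sigma => [eta s] [th t] [Heta Hs] Hd; rewrite /code_lt /=.
case=> [lt_eta_th|[E lt_st]].
- have Hth m : klt (th m).1 d by apply: Hd; left; exists m.
  have [zeta [Hzeta lt_eta lt_th Hz]] := lt_I0_interpolate Hth lt_eta_th.
  exists (zeta, [::]); split; [|by right; left|by right; left|].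
    by split=> //; apply/increasingP; constructor.
  move=> a [[m <-]|[]]; case: (Hz m) => [->|[-> Hm]]; first by left.
  by right; split=> //; left; exists m.
- have Htd : bounded_by klt d t by move=> a Ha; apply: Hd; right.
  have [p [u Es] [Hpt Hps Hpd]] := stages_lt_interpolate klt_trans Htd lt_st.
  exists (eta, p); split.
  + by split=> //; apply: increasing_prefix Es Hs.
  + by case: Hpt => [->|?]; [left; split=> // n; rewrite E | right; right].
  + by case: Hps => [->|?]; [left | right; right].
  + move=> a [[m <-]|Ha]; right; split.
    * by left; exists m.
    * by apply: Hd; left; exists m; rewrite /= E.
    * by right; rewrite Es; apply: in_or_app; left.
    * exact: Hpd.
Qed.

End Interpolation.

Section Limits.
Variables (K : Type) (klt : K -> K -> Prop) (k0 : K).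
Hypothesis klt_trans : forall x y z, klt x y -> klt y z -> klt x z.
Hypothesis klt_total : forall x y, klt x y \/ x = y \/ klt y x.
Hypothesis k0_least : forall x, ~ klt x k0.
Variable delta : K.
Hypothesis delta_limit : is_limit klt delta k0.

Lemma limit_gt_k0 : klt k0 delta.
Proof.
case: delta_limit => Hne _.
by case: (klt_total k0 delta) => [//|[E|/k0_least //]]; case: Hne.
Qed.

Lemma limit_bounds_list (L : list K) :
  exists2 beta, klt beta delta & forall a, In a L -> klt a delta -> klt a beta.
Proof.
elim: L => [|x L [beta lt_beta Hbeta]]; first by exists k0; [exact: limit_gt_k0|].
case: (classic (klt x delta)) => [Hx|Hx]; last first.
  by exists beta => // a [<- /Hx|/Hbeta].
case: (klt_total x beta) => [lt_x_beta|le_beta_x].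
  by exists beta => // a [<-|/Hbeta].
have [b [lt_x_b lt_b_delta]] := delta_limit.2 x Hx.
have lt_beta_b : klt beta b.
  by case: le_beta_x => [<- //|lt_beta_x]; exact: klt_trans lt_beta_x lt_x_b.
by exists b => // a [<- //|Ha Had]; exact: klt_trans (Hbeta a Ha Had) lt_beta_b.
Qed.

Lemma limit_bounds_occurs nu : in_I0 k0 nu.1 -> exists2 beta, klt beta delta &
  forall a, a = k0 \/ occurs a nu /\ klt a delta -> klt a beta.
Proof.
case=> N HN; pose L := k0 :: map (fun m => (nu.1 m).1) (List.seq 0 N) ++ nu.2.
have [beta lt_beta Hbeta] := limit_bounds_list L.
exists beta => // a [->|[[[m <-]|Ha] Had]]; apply: Hbeta => //.
- by left.
- exact: limit_gt_k0.
- case: (ltnP m N) => Hm; last by left; rewrite HN.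
  by right; apply: in_or_app; left; apply: in_map; apply/in_seq; lia.
- by right; apply: in_or_app; right.
Qed.

End Limits.

Theorem mainTheorem12
  (K : Type) (klt : K -> K -> Prop) (k0 : K)
  (Hwo : strict_well_order klt)
  (Hk0 : forall x, ~ klt x k0)
  (Hcard : is_cardinal klt)
  (Hunc : uncountable K)
  (Hreg : regular klt)
  (Hpow : kappa_lt_kappa klt)
  (Homega : omega_powers_small klt)
  (lt : elt K -> elt K -> Prop)
  (Hlt : construction_order klt k0 lt) :
  forall (delta : K), is_limit klt delta k0 ->
  forall nu : elt K, in_I klt k0 nu ->
  exists beta : K, klt beta delta /\
    forall sigma : elt K, in_Ialpha klt k0 delta sigma -> lt nu sigma ->
      exists sigma' : elt K, in_Ialpha klt k0 beta sigma' /\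
        (eq_el sigma sigma' \/ lt sigma' sigma) /\
        (eq_el sigma' nu \/ lt nu sigma').
Proof.
case: Hwo => _ [klt_irrefl [klt_trans klt_total]] delta Hdelta nu Hnu.
have lt_code := lt_codeE klt_irrefl klt_trans klt_total Hlt.
have [beta lt_beta Hbeta] := limit_bounds_occurs klt_trans klt_total Hk0 Hdelta Hnu.1.
exists beta; split=> // sigma /in_IalphaE [Hsigma Hsd] /(lt_code _ _ Hnu Hsigma) lt_nu_sigma.
have [sigma' [Hsigma' le_sigma le_nu Hocc]] := code_lt_interpolate klt_trans Hnu Hsd lt_nu_sigma.
exists sigma'; split; first by apply/in_IalphaE; split=> // a /Hocc /Hbeta.
split; first by case: le_sigma => [|/(lt_code _ _ Hsigma' Hsigma)]; auto.
by case: le_nu => [|/(lt_code _ _ Hnu Hsigma')]; auto.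
Qed.
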